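(* Let $\mathit{GF}(q)$ be a finite field with $q=p^n$, $p$ prime. If $F_{q,\phi}$ and $F_{q,\phi}^{\dagger}$ can be performed for some nonzero $\mathit{GF}(p)$-linear map $\phi:\mathit{GF}(q)\to\mathit{GF}(p)$, then there is a quantum algorithm making a single query to the black box that solves the quantum hidden linear structure problem over $\mathit{GF}(q)$ exactly (i.e. outputs $s$ with probability $1$).
   Context: $F_{q,\phi}$ is the unitary on the space with orthonormal basis $\{\ket{x}:x\in\mathit{GF}(q)\}$ defined by $F_{q,\phi}\ket{x}=\frac{1}{\sqrt q}\sum_{y\in \mathit{GF}(q)}\omega^{\phi(xy)}\ket{y}$, $\omega=e^{2\pi i/p}$ (elements of $\mathit{GF}(p)$ in the exponent identified with integers $0,\dots,p-1$; $\mathit{GF}(q)$ viewed as an $n$-dimensional vector space over $\mathit{GF}(p)$). The quantum hidden linear structure problem over $\mathit{GF}(q)$: one is given a black box performing the unitary $\ket{x}\ket{y}\mapsto\ket{x}\ket{\pi(y+sx)}$ on two $\mathit{GF}(q)$-valued registers, where $\pi$ is an unknown permutation of $\mathit{GF}(q)$ and $s\in\mathit{GF}(q)$ is unknown; the goal is to determine $s$. *)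

From HB Require Import structures.
From mathcomp Require Import all_boot all_order all_algebra all_fingroup.
Set Implicit Arguments. Unset Strict Implicit. Unset Printing Implicit Defensive.
Import Order.TTheory GRing.Theory Num.Theory.
Local Open Scope ring_scope.

(* The amplitude field C is any numeric closed field (e.g. algC, or the
   complex numbers); w is a primitive p-th root of unity (e.g. e^{2 pi i/p}).
   A state of the two GF(q)-valued registers is a function F * F -> C
   (amplitude of the basis vector |x>|y>). *)

Section QHLS.
Variables (F : finFieldType) (p : nat) (C : numClosedFieldType) (w : C).
Variable phi : F -> 'F_p.

Definition state := (F * F)%type -> C.

Definition fourier_coef (x y : F) : C :=
  (sqrtC (#|F|%:R))^-1 * w ^+ (nat_of_ord (phi (x * y))).

Definition F1 (v : state) : state :=
  fun z => \sum_(x : F) fourier_coef x z.1 * v (x, z.2).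
Definition F2 (v : state) : state :=
  fun z => \sum_(y : F) fourier_coef y z.2 * v (z.1, y).
Definition Fdag1 (v : state) : state :=
  fun z => \sum_(x : F) (fourier_coef z.1 x)^* * v (x, z.2).
Definition Fdag2 (v : state) : state :=
  fun z => \sum_(y : F) (fourier_coef z.2 y)^* * v (z.1, y).

Definition perm_gate (sigma : {perm (F * F)}) (v : state) : state :=
  fun z => v ((sigma^-1)%g z).

(* the black box |x>|y> |-> |x>|pi(y + s x)> *)
Definition oracle (pi : {perm F}) (s : F) (v : state) : state :=
  fun z => v (z.1, (pi^-1)%g z.2 - s * z.1).

Inductive gate : Type :=
  | GF1 | GF2 | GFdag1 | GFdag2 | GPerm of {perm (F * F)}.

Definition apply_gate (g : gate) : state -> state :=
  match g with
  | GF1 => F1 | GF2 => F2 | GFdag1 => Fdag1 | GFdag2 => Fdag2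
  | GPerm sigma => perm_gate sigma
  end.

Definition run (c : seq gate) (v : state) : state :=
  foldl (fun v g => apply_gate g v) v c.

Definition basis (z0 : F * F) : state := fun z => (z == z0)%:R.

(* A single-query algorithm: start in a computational basis state, apply a
   circuit of allowed gates, make one query, apply another circuit, measure
   both registers in the computational basis and post-process classically. *)
Record one_query_alg : Type := OneQueryAlg {
  alg_init : F * F;
  alg_pre  : seq gate;
  alg_post : seq gate;
  alg_out  : F * F -> F
}.

Definition final_state (A : one_query_alg) (pi : {perm F}) (s : F) : state :=
  run (alg_post A) (oracle pi s (run (alg_pre A) (basis (alg_init A)))).

Definition success_prob (A : one_query_alg) (pi : {perm F}) (s : F) : C :=
  \sum_(z : F * F | alg_out A z == s) `|final_state A pi s z| ^+ 2.

End QHLS.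

(* phi : GF(q) -> GF(p) is GF(p)-linear; the GF(p)-action on GF(q) is
   c . x = (c as integer 0..p-1)%:R * x. *)
Definition Fp_linear (F : finFieldType) (p : nat) (phi : F -> 'F_p) : Prop :=
  (forall x y, phi (x + y) = phi x + phi y) /\
  (forall (c : 'F_p) x, phi ((nat_of_ord c)%:R * x) = c * phi x).

From HB Require Import structures.
From mathcomp Require Import all_boot all_order all_algebra all_fingroup.
From mathcomp Require Import ring.
From Stdlib Require Import FunctionalExtensionality.
Set Implicit Arguments. Unset Strict Implicit. Unset Printing Implicit Defensive.
Import Order.TTheory GRing.Theory Num.Theory.
Local Open Scope ring_scope.

(* Phase kickback.  chi x := w ^+ phi x is an additive character of GF(q),
   and it is nontrivial on every line a * GF(q), a != 0, because phi != 0;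
   hence sum_x chi (a x) = q [a = 0], so F_{q,phi}^dagger inverts F_{q,phi}.
   Writing |a^> := F_{q,phi}|a>, the oracle maps |a^>|b^> to
   |(a - b s)^> (pi |b^>), since chi turns the shift y |-> y - s x into
   the phase chi (- b s x).
   Starting from |0>|1>, one query thus produces |(-s)^> (pi |1^>), and
   F_{q,phi}^dagger on the first register leaves it exactly in |-s>. *)

Definition tensor (T : Type) (R : pzRingType) (u v : T -> R) : T * T -> R :=
  fun z => u z.1 * v z.2.

Definition delta {T : eqType} {R : pzRingType} (a : T) : T -> R :=
  fun x => (x == a)%:R.

Lemma sum_norm_tensor (T : finType) (R : numDomainType) (P : pred T)
    (u v : T -> R) :
  \sum_(z : T * T | P z.1) `|tensor u v z| ^+ 2 =
  (\sum_(x | P x) `|u x| ^+ 2) * \sum_y `|v y| ^+ 2.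
Proof.
rewrite big_distrlr pair_big_dep /=.
by apply: eq_big => [z | z _]; rewrite ?andbT // normrM exprMn.
Qed.

Lemma sum_char_eq0 (V : finZmodType) (R : idomainType) (f : V -> R) (g : V) :
  {morph f : x y / x + y >-> x * y} -> f g != 1 -> \sum_x f x = 0.
Proof.
move=> fD fg_neq1; set S := \sum_x f x.
have S_shift : S = f g * S.
  rewrite /S big_distrr (reindex_inj (addIr g)) /=.
  by apply: eq_bigr => x _; rewrite fD mulrC.
apply/eqP; move/eqP: S_shift; rewrite -subr_eq0 -{1}[S]mul1r -mulrBl.
by rewrite mulf_eq0 subr_eq0 eq_sym (negbTE fg_neq1).
Qed.

Section QuantumFourier.
Variables (F : finFieldType) (p : nat) (C : numClosedFieldType) (w : C).
Variable phi : F -> 'F_p.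
Hypotheses (p_pr : prime p) (w_prim : p.-primitive_root w).
Hypothesis phiD : {morph phi : x y / x + y}.

Local Notation q := (#|F|%:R : C).
Local Notation c := (sqrtC q)^-1.
Local Notation fc := (fourier_coef w phi).

Definition chi (x : F) : C := w ^+ phi x.

Definition dft (u : F -> C) : F -> C := fun y => \sum_x fc x y * u x.
Definition dft_adj (u : F -> C) : F -> C := fun x => \sum_y (fc x y)^* * u y.

Lemma fourier_coefE x y : fc x y = c * chi (x * y).
Proof. by []. Qed.

Lemma chiD : {morph chi : x y / x + y >-> x * y}.
Proof.
have w_mod n : w ^+ (n %% (Zp_trunc (pdiv p)).+2) = w ^+ n.
  by rewrite Fp_cast // prim_expr_mod.
by move=> x y; rewrite /chi phiD -exprD /= w_mod.
Qed.

Lemma chi0 : chi 0 = 1.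
Proof.
have phi0 : phi 0 = 0 by apply: (addrI (phi 0)); rewrite -phiD !addr0.
by rewrite /chi phi0 expr0.
Qed.

Lemma norm_chi x : `|chi x| = 1.
Proof.
have w_norm : `|w| = 1.
  apply: (pexpIrn (prime_gt0 p_pr)); rewrite ?nnegrE ?ler01 //.
  by rewrite -normrX (prim_expr_order w_prim) normr1 expr1n.
by rewrite /chi normrX w_norm expr1n.
Qed.

Lemma conj_chi x : (chi x)^* = chi (- x).
Proof.
have chi_unit : chi x * (chi x)^* = 1 by rewrite -normCK norm_chi expr1n.
by rewrite -[LHS]mul1r -chi0 -(subrr x) chiD mulrAC chi_unit mul1r.
Qed.

Lemma chi_neq1 x : phi x != 0 -> chi x != 1.
Proof.
move=> phix_neq0; rewrite /chi -(prim_order_dvd w_prim).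
have phix_gt0 : (0 < phi x)%N.
  by rewrite lt0n; apply: contra phix_neq0 => /eqP phix0; apply/eqP/val_inj.
have phix_lt : (phi x < p)%N by rewrite -[X in (_ < X)%N](Fp_cast p_pr).
by apply/negP => /(dvdn_leq phix_gt0); rewrite leqNgt phix_lt.
Qed.

Lemma q_neq0 : q != 0.
Proof. by rewrite pnatr_eq0 -lt0n; apply/card_gt0P; exists 0. Qed.

Lemma sqr_c : c ^+ 2 = q^-1.
Proof. by rewrite exprVn sqrtCK. Qed.

Lemma conj_c : c^* = c.
Proof. by rewrite geC0_conj // invr_ge0 sqrtC_ge0 ler0n. Qed.

Lemma norm_fourier_coef x y : `|fc x y| ^+ 2 = q^-1.
Proof.
rewrite fourier_coefE normrM norm_chi mulr1 ger0_norm ?sqr_c //.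
by rewrite invr_ge0 sqrtC_ge0 ler0n.
Qed.

Lemma sum_norm_fourier_coef x : \sum_y `|fc x y| ^+ 2 = 1.
Proof.
under eq_bigr do rewrite norm_fourier_coef.
by rewrite sumr_const -(mulr_natr q^-1) (mulVf q_neq0).
Qed.

Lemma dft_delta a : dft (delta a) = fc a.
Proof.
apply: functional_extensionality => y; rewrite /dft (bigD1 a) //= big1 => [|x].
  by rewrite /delta eqxx mulr1 addr0.
by rewrite /delta => /negbTE ->; rewrite mulr0.
Qed.

Lemma oracle_tensor_fourier_coef (pi : {perm F}) s a b :
  oracle pi s (tensor (fc a) (fc b)) =
  tensor (fc (a - b * s)) (fc b \o (pi^-1)%g).
Proof.
apply: functional_extensionality => z.
rewrite /oracle /tensor /= !fourier_coefE.
by rewrite mulrBr mulrBl -[b * s * _]mulrA !chiD; ring.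
Qed.

Lemma basis_tensor (a b : F) : basis C (a, b) = tensor (delta a) (delta b).
Proof.
apply: functional_extensionality => -[x y].
by rewrite /basis /tensor /delta xpair_eqE -mulnb natrM.
Qed.

Lemma F1_tensor u v : F1 w phi (tensor u v) = tensor (dft u) v.
Proof.
apply: functional_extensionality => z; rewrite /F1 /tensor /dft big_distrl.
by apply: eq_bigr => x _; rewrite mulrA.
Qed.

Lemma F2_tensor u v : F2 w phi (tensor u v) = tensor u (dft v).
Proof.
apply: functional_extensionality => z; rewrite /F2 /tensor /dft big_distrr.
by apply: eq_bigr => y _; rewrite mulrCA.
Qed.

Lemma Fdag1_tensor u v : Fdag1 w phi (tensor u v) = tensor (dft_adj u) v.
Proof.
apply: functional_extensionality => z.
rewrite /Fdag1 /tensor /dft_adj big_distrl.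
by apply: eq_bigr => x _; rewrite mulrA.
Qed.

Variable x0 : F.
Hypothesis phi_x0 : phi x0 != 0.

Lemma sum_chi_mul a : \sum_x chi (a * x) = (a == 0)%:R * q.
Proof.
have [-> | a_neq0] := eqVneq a 0.
  by under eq_bigr do rewrite mul0r chi0; rewrite sumr_const mul1r.
rewrite mul0r (@sum_char_eq0 _ _ (fun x => chi (a * x)) (a^-1 * x0)) //.
  by move=> x y /=; rewrite mulrDr chiD.
by rewrite mulrA mulfV // mul1r chi_neq1.
Qed.

Lemma dft_adj_fourier_coef a : dft_adj (fc a) = delta a.
Proof.
apply: functional_extensionality => x; rewrite /dft_adj /delta.
have conj_fc_mul y : (fc x y)^* * fc a y = c ^+ 2 * chi ((a - x) * y).
  rewrite !fourier_coefE rmorphM /= conj_c conj_chi mulrBl chiD.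
  by rewrite expr2; ring.
rewrite (eq_bigr _ (fun y _ => conj_fc_mul y)) -big_distrr sum_chi_mul.
by rewrite /= subr_eq0 sqr_c mulrCA (mulVf q_neq0) mulr1 eq_sym.
Qed.

End QuantumFourier.

Theorem theorem4 (F : finFieldType) (p : nat) (C : numClosedFieldType) (w : C)
    (phi : F -> 'F_p) :
  prime p -> p \in [pchar F] -> p.-primitive_root w ->
  Fp_linear phi -> (exists x, phi x != 0) ->
  exists A : one_query_alg F,
    forall (pi : {perm F}) (s : F), success_prob w phi A pi s = 1.
Proof.
move=> p_pr _ w_prim [phiD _] [x0 phi_x0].
exists (OneQueryAlg (0, 1) [:: GF1 F; GF2 F] [:: GFdag1 F] (fun z => - z.1)).
move=> pi s.
rewrite /success_prob /final_state /run /= basis_tensor F1_tensor F2_tensor.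
rewrite !dft_delta oracle_tensor_fourier_coef // Fdag1_tensor.
rewrite (dft_adj_fourier_coef p_pr w_prim phiD phi_x0) sub0r mul1r.
rewrite (sum_norm_tensor (fun x => - x == s)) (big_pred1 (- s)); last first.
  by move=> x; rewrite /= eqr_oppLR.
rewrite /delta eqxx normr1 expr1n mul1r (reindex_inj (@perm_inj _ pi)) /=.
under eq_bigr do rewrite permK.
exact: sum_norm_fourier_coef.
Qed.
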